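(* Let $\mathcal C = (\mathcal X, \Sigma, \mathcal F)$ be a string constraint problem as described in the context. For every variable $x \in \mathcal X$ and every assignment $\rho$ to $\mathcal X$, the valid domain $V^\rho_x$ is a regular language over $\Sigma$.
   Context: A string constraint problem is a triple $\mathcal C = (\mathcal X, \Sigma, \mathcal F)$, where $\mathcal X = \{x_1,\ldots,x_n\}$ is a finite set of variables, $\Sigma$ is a finite alphabet, and $\mathcal F = \{f_1,\ldots,f_o\}$ is a finite set of formulas generated by the grammar $f ::= f \lor f \mid \lnot f \mid \mathrm{match}(x,\alpha)$, where $x \in \mathcal X$ and $\alpha$ is a regular expression over $\Sigma$. An assignment $\rho$ to $\mathcal X$ maps each $x_i$ to a string $\rho(x_i) \in \Sigma^*$. The atom $\mathrm{match}(x,\alpha)$ is true under $\rho$ iff $\rho(x) \in L(\alpha)$, the language of $\alpha$; $\lor$ and $\lnot$ have their usual boolean meaning. The solution set is $sol(\mathcal C) = \{\rho \mid \rho \models f \text{ for all } f \in \mathcal F\}$. For assignments $\rho,\rho'$ to $\mathcal X$, their concatenation is the assignment $\rho\rho'$ with $(\rho\rho')(x_j) = \rho(x_j)\rho'(x_j)$ for all $j$. The valid domain of $x_i$ relative to $\rho$ is $V^\rho_{x_i} = \{ w \in \Sigma^* \mid \exists \rho' : \rho'(x_i) = w \land \rho\rho' \in sol(\mathcal C)\}$, where $\rho'$ ranges over assignments to $\mathcal X$. *)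

From Stdlib Require List.
From mathcomp Require Import all_boot.
Set Implicit Arguments. Unset Strict Implicit. Unset Printing Implicit Defensive.

Inductive regex (Sigma : Type) : Type :=
| RVoid : regex Sigma
| REps : regex Sigma
| RAtom : Sigma -> regex Sigma
| RCat : regex Sigma -> regex Sigma -> regex Sigma
| RUnion : regex Sigma -> regex Sigma -> regex Sigma
| RStar : regex Sigma -> regex Sigma.

Fixpoint lang (Sigma : finType) (r : regex Sigma) (w : seq Sigma) : Prop :=
  match r with
  | RVoid => False
  | REps => w = [::]
  | RAtom a => w = [:: a]
  | RCat r1 r2 => exists u v, w = u ++ v /\ lang r1 u /\ lang r2 v
  | RUnion r1 r2 => lang r1 w \/ lang r2 w
  | RStar r1 => exists ws : seq (seq Sigma),
      w = flatten ws /\ forall u, u \in ws -> lang r1 u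
  end.

Definition regular (Sigma : finType) (L : seq Sigma -> Prop) : Prop :=
  exists r : regex Sigma, forall w, L w <-> lang r w.

Inductive formula (X Sigma : Type) : Type :=
| FOr : formula X Sigma -> formula X Sigma -> formula X Sigma
| FNot : formula X Sigma -> formula X Sigma
| FMatch : X -> regex Sigma -> formula X Sigma.

Definition assignment (X Sigma : Type) := X -> seq Sigma.

Fixpoint holds (X : finType) (Sigma : finType) (rho : assignment X Sigma)
  (f : formula X Sigma) : Prop :=
  match f with
  | FOr f1 f2 => holds rho f1 \/ holds rho f2
  | FNot f1 => ~ holds rho f1
  | FMatch x r => lang r (rho x)
  end.

Definition sol (X Sigma : finType) (F : seq (formula X Sigma))
  (rho : assignment X Sigma) : Prop :=
  forall f, List.In f F -> holds rho f.

Definition concat_assign (X Sigma : Type) (rho rho' : assignment X Sigma)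
  : assignment X Sigma := fun x => rho x ++ rho' x.

Definition valid_domain (X Sigma : finType) (F : seq (formula X Sigma))
  (rho : assignment X Sigma) (x : X) : seq Sigma -> Prop :=
  fun w => exists rho' : assignment X Sigma,
      rho' x = w /\ sol F (concat_assign rho rho').

From Stdlib Require List.
From mathcomp Require Import all_boot.
From mathcomp Require Import boolp.

(* Whether rho rho' satisfies F depends on rho'(x) only through which of the languages
   {w | rho(x) w \in L(alpha)}, for the finitely many regular expressions alpha of F,
   contain rho'(x). Hence the valid domain is a finite union of Boolean combinations of
   left quotients of regular languages. These closure properties are transparent on the
   Myhill-Nerode side of Kleene's theorem: a language is regular iff it has finitely many
   left quotients, the quotient formulas for concatenation and star giving one direction
   and the McNaughton-Yamada construction on the automaton of quotients the other. *)

Set Implicit Arguments. Unset Strict Implicit. Unset Printing Implicit Defensive.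

Lemma cat_eq_cat (T : Type) (u w x y : seq T) :
  u ++ w = x ++ y <->
  (exists w1, x = u ++ w1 /\ w = w1 ++ y) \/ (exists u2, u = x ++ u2 /\ y = u2 ++ w).
Proof.
split; last by case=> -[s [-> ->]]; rewrite catA.
elim: u x => [|a u IH] [|b x] /=.
- by move=> ->; left; exists [::].
- by move=> ->; left; exists (b :: x).
- by move=> <-; right; exists (a :: u).
- by case=> <- /IH [[w1 [-> ->]] | [u2 [-> ->]]]; [left; exists w1 | right; exists u2].
Qed.

Section Languages.
Variable Sigma : finType.
Implicit Types (L M : seq Sigma -> Prop) (u v w : seq Sigma).

Definition lquot L u : seq Sigma -> Prop := fun w => L (u ++ w).

Definition conc L M w : Prop := exists u v, w = u ++ v /\ L u /\ M v.

Definition star L w : Prop :=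
  exists ws : seq (seq Sigma), w = flatten ws /\ forall u, u \in ws -> L u.

Lemma lquot_cat L u v : lquot (lquot L u) v = lquot L (u ++ v).
Proof. by apply/funext => w; rewrite /lquot catA. Qed.

Lemma star_nil L : star L [::].
Proof. by exists [::]. Qed.

Lemma star_cons L u v : L u -> star L v -> star L (u ++ v).
Proof.
move=> Lu [vs [-> Lvs]]; exists (u :: vs); split=> // s.
by rewrite inE => /predU1P [-> | /Lvs].
Qed.

Lemma star_cat L u v : star L u -> star L v -> star L (u ++ v).
Proof.
move=> [us [-> Lus]] [vs [-> Lvs]]; exists (us ++ vs); rewrite flatten_cat.
by split=> // s; rewrite mem_cat => /orP [/Lus | /Lvs].
Qed.

Lemma conc_lquot L M u w :
  conc L M (u ++ w) <->
  conc (lquot L u) M w \/ exists2 v, (exists2 u1, u = u1 ++ v & L u1) & M (v ++ w).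
Proof.
split=> [[x [y [/cat_eq_cat [[w1 [-> ->]] | [v [-> ->]]] [Lx My]]]] | ].
- by left; exists w1, y.
- by right; exists v => //; exists x.
case=> [[w1 [w2 [-> [Lw1 Mw2]]]] | [v [u1 -> Lu1] Mvw]].
- by exists (u ++ w1), w2; rewrite catA.
- by exists u1, (v ++ w); rewrite catA.
Qed.

Lemma star_lquot L u w : u != [::] ->
  star L (u ++ w) <->
  exists2 v : seq Sigma,
    v != [::] /\ (exists2 u1, u = u1 ++ v & star L u1) & conc (lquot L v) (star L) w.
Proof.
move=> nu; split=> [[ws [e Lws]] | [v [_ [u1 -> Lu1]] [w1 [w2 [-> [Lvw1 Lw2]]]]]]; last first.
  by rewrite -catA [v ++ _]catA; exact: star_cat Lu1 (@star_cons L (v ++ w1) w2 Lvw1 Lw2).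
elim: ws u nu e Lws => [|b ws IH] u nu /=; first by case: u nu.
move=> /cat_eq_cat [[w1 [-> ->]] | [u2 [eu e]]] Lws.
  exists u; first by split=> //; exists [::] => //; apply: star_nil.
  exists w1, (flatten ws); split => //; split; first by apply: Lws; rewrite mem_head.
  by exists ws; split => // s ws_s; apply: Lws; rewrite inE ws_s orbT.
have Lb : L b by apply: Lws; rewrite mem_head.
have Lws' s : s \in ws -> L s by move=> ws_s; apply: Lws; rewrite inE ws_s orbT.
subst u; have [u2_nil | nu2] := eqVneq u2 [::].
  move: e nu; rewrite u2_nil cats0 /= => <- nb.
  exists b; first by split=> //; exists [::] => //; apply: star_nil.
  by exists [::], (flatten ws); split => //; split; [rewrite /lquot cats0 | exists ws].
have [v [nv [u1 -> Lu1]] Lvw] := IH u2 nu2 (esym e) Lws'.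
by exists v => //; split => //; exists (b ++ u1); [rewrite catA | apply: star_cons].
Qed.

Definition recognizable L : Prop :=
  exists (I : finType) (Q : I -> seq Sigma -> Prop), forall u, exists i, Q i = lquot L u.

Definition quot_set (I : finType) (Q : I -> seq Sigma -> Prop) M (S : seq Sigma -> Prop) :
  {set I} := [set i | `[< exists2 v, S v & Q i = lquot M v >]].

Lemma quot_setP (I : finType) (Q : I -> seq Sigma -> Prop) M S
    (K : (seq Sigma -> Prop) -> seq Sigma -> Prop) w :
  (forall v, exists i, Q i = lquot M v) ->
  (exists2 i, i \in quot_set Q M S & K (Q i) w) <-> exists2 v, S v & K (lquot M v) w.
Proof.
move=> hM; split=> [[i] | [v Sv Kw]].
  by rewrite inE => /asboolP [v Sv ->] Kw; exists v.
have [i Qi] := hM v; exists i; last by rewrite Qi.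
by rewrite inE; apply/asboolP; exists v.
Qed.

Lemma recognizable_const L : (forall u v, L u -> L v) -> recognizable L.
Proof.
move=> Lconst; exists unit, (fun _ => L) => u; exists tt.
by apply/predeqP => w; split; apply: Lconst.
Qed.

Lemma recognizable_singleton x : recognizable (fun w => w = x).
Proof.
exists (option 'I_(size x).+1),
  (fun (o : option 'I_(size x).+1) w => if o is Some i then w = drop i x else False).
move=> u; have [ux | nux] := eqVneq (take (size u) x) u.
  have su : size u < (size x).+1 by rewrite ltnS -{1}ux size_take_min geq_minr.
  exists (Some (Ordinal su)); apply/predeqP => w /=.
  by split=> [-> | <-]; rewrite /lquot ?drop_size_cat // -{1}ux cat_take_drop.
exists None; apply/predeqP => w /=; split=> // uwx.
by move: nux; rewrite -uwx take_size_cat ?eqxx.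
Qed.

Lemma recognizable_lquot L u : recognizable L -> recognizable (lquot L u).
Proof.
by move=> [I [Q hQ]]; exists I, Q => v; have [i Qi] := hQ (u ++ v); exists i; rewrite lquot_cat.
Qed.

Lemma recognizable_compl L : recognizable L -> recognizable (fun w => ~ L w).
Proof.
by move=> [I [Q hQ]]; exists I, (fun i w => ~ Q i w) => u; have [i Qi] := hQ u; exists i; rewrite Qi.
Qed.

Lemma recognizable_and L M :
  recognizable L -> recognizable M -> recognizable (fun w => L w /\ M w).
Proof.
move=> [I [QL hL]] [J [QM hM]]; exists (I * J)%type, (fun ij w => QL ij.1 w /\ QM ij.2 w).
by move=> u; have [i Qi] := hL u; have [j Qj] := hM u; exists (i, j); rewrite /= Qi Qj.
Qed.

Lemma recognizable_or L M :
  recognizable L -> recognizable M -> recognizable (fun w => L w \/ M w).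
Proof.
move=> [I [QL hL]] [J [QM hM]]; exists (I * J)%type, (fun ij w => QL ij.1 w \/ QM ij.2 w).
by move=> u; have [i Qi] := hL u; have [j Qj] := hM u; exists (i, j); rewrite /= Qi Qj.
Qed.

Lemma recognizable_conc L M : recognizable L -> recognizable M -> recognizable (conc L M).
Proof.
move=> [I [QL hL]] [J [QM hM]].
exists (I * {set J})%type,
  (fun (iT : I * {set J}) w => conc (QL iT.1) M w \/ exists2 j, j \in iT.2 & QM j w) => u.
have [i Qi] := hL u; exists (i, quot_set QM M (fun v => exists2 u1, u = u1 ++ v & L u1)).
apply/predeqP => w; rewrite /= Qi; apply: iff_sym; apply: iff_trans (conc_lquot _ _ _ _) _.
by apply: or_iff_compat_l; apply: iff_sym; apply: (quot_setP _ (fun N => N)).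
Qed.

Lemma recognizable_star L : recognizable L -> recognizable (star L).
Proof.
move=> [I [Q hQ]].
exists (option {set I}), (fun (o : option {set I}) w =>
  if o is Some T then exists2 i, i \in T & conc (Q i) (star L) w else star L w) => u.
have [-> | nu] := eqVneq u [::]; first by exists None.
exists (Some (quot_set Q L (fun v => v != [::] /\ exists2 u1, u = u1 ++ v & star L u1))).
apply/predeqP => w; apply: iff_trans (iff_sym (star_lquot _ _ nu)).
exact: (quot_setP _ (fun N => conc N (star L))).
Qed.

Lemma regex_recognizable (r : regex Sigma) : recognizable (lang r).
Proof.
elim: r => [||a|r1 IH1 r2 IH2|r1 IH1 r2 IH2|r IH] /=.
- by apply: recognizable_const.
- exact: recognizable_singleton.
- exact: recognizable_singleton.
- exact: recognizable_conc.
- exact: recognizable_or.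
- exact: recognizable_star.
Qed.

End Languages.

Section Regular.
Variable Sigma : finType.
Implicit Types (L M : seq Sigma -> Prop).

Lemma regular_lang (r : regex Sigma) : regular (lang r).
Proof. by exists r. Qed.

Lemma regular_ext L M : (forall w, L w <-> M w) -> regular L -> regular M.
Proof. by move=> /predeqP <-. Qed.

Lemma regular_or L M : regular L -> regular M -> regular (fun w => L w \/ M w).
Proof. by move=> [r /predeqP ->] [s /predeqP ->]; apply: (regular_lang (RUnion r s)). Qed.

Lemma regular_conc L M : regular L -> regular M -> regular (conc L M).
Proof. by move=> [r /predeqP ->] [s /predeqP ->]; apply: (regular_lang (RCat r s)). Qed.

Lemma regular_star L : regular L -> regular (star L).
Proof. by move=> [r /predeqP ->]; apply: (regular_lang (RStar r)). Qed.

Lemma regular_guard (P : Prop) L : regular L -> regular (fun w => P /\ L w).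
Proof.
case: (pselect P) => [p | np] hL; first by apply: regular_ext hL => w; split=> // -[].
by exists (RVoid Sigma) => w; split=> // -[].
Qed.

Lemma regular_bigcup (T : finType) (P : T -> Prop) (L : T -> seq Sigma -> Prop) :
  (forall t, regular (L t)) -> regular (fun w => exists2 t, P t & L t w).
Proof.
move=> hL; suff /(_ (enum T)) : forall s : seq T, regular (fun w => exists2 t, t \in s /\ P t & L t w).
  by apply: regular_ext => w; split=> -[t]; [case=> _ Pt Lw | move=> Pt Lw]; exists t; rewrite ?mem_enum.
elim=> [|t s IH]; first by exists (RVoid Sigma) => w; split=> // -[t []].
apply: regular_ext (regular_or (regular_guard (P t) (hL t)) IH) => w.
split=> [[[Pt Lw] | [t' [t's Pt'] Lw]] | [t' [/predU1P [-> | t's] Pt'] Lw]].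
- by exists t; rewrite ?mem_head.
- by exists t'; rewrite ?inE ?t's ?orbT.
- by left.
- by right; exists t'.
Qed.

End Regular.

Section Paths.
Variables (Sigma S : finType) (next : S -> Sigma -> S).
Implicit Types (X : {set S}) (p q z : S) (u v w : seq Sigma).

Fixpoint walk X p w q : Prop :=
  if w is a :: w' then p \in X /\ walk X (next p a) w' q else p = q.

(* Reading [w] from [p] ends in [q], and every state strictly in between lies in [X]. *)
Definition reach X p w q : Prop :=
  if w is a :: w' then walk X (next p a) w' q else p = q.

Lemma walk_cat X p u v q : walk X p (u ++ v) q <-> exists m, walk X p u m /\ walk X m v q.
Proof.
elim: u p => [|a u IH] p /=; first by split=> [h | [m [-> //]]]; exists p.
rewrite IH; split=> [[pX [m [hu hv]]] | [m [[pX hu] hv]]]; first by exists m.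
by split=> //; exists m.
Qed.

Lemma reach_cat X p m q u v : m \in X -> reach X p u m -> reach X m v q -> reach X p (u ++ v) q.
Proof.
case: u => [|a u] mX /= hu hv; first by rewrite hu.
by apply/walk_cat; exists m; split=> //; case: v hv.
Qed.

Lemma reach_subset X (Y : {set S}) p w q : X \subset Y -> reach X p w q -> reach Y p w q.
Proof.
move=> /subsetP sXY; case: w => [|a w] //=; elim: w (next p a) => [|b w IH] r //=.
by case=> /sXY rY /IH.
Qed.

Lemma reach_setT p w q : reach setT p w q <-> foldl next p w = q.
Proof.
case: w => [|a w] //=; elim: w (next p a) => [|b w IH] r //=.
by rewrite in_setT IH; split=> [[] | ].
Qed.

Lemma reach_set0 p w q :
  reach set0 p w q <-> p = q /\ w = [::] \/ exists2 a, next p a = q & w = [:: a].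
Proof.
case: w => [|a [|b w]] /=.
- by split=> [-> | [[] // | [b _ //]]]; left.
- by split=> [<- | [[_ //] | [b <- [->]]]]; [right; exists a |].
- by rewrite in_set0; split=> [[] | [[_ //] | [c _ //]]].
Qed.

Lemma walk_first_visit X z p w q :
  walk (z |: X) p w q ->
  walk X p w q \/ exists u v, [/\ w = u ++ v, walk X p u z & reach (z |: X) z v q].
Proof.
elim: w p => [|a w IH] p /=; first by left.
case=> /setU1P [-> h | pX /IH [h | [u [v [-> hu hv]]]]].
- by right; exists [::], (a :: w).
- by left.
- by right; exists (a :: u), v.
Qed.

Lemma reach_first_visit X z p w q :
  reach (z |: X) p w q ->
  reach X p w q \/
  exists u v, [/\ w = u ++ v, u != [::], reach X p u z & reach (z |: X) z v q].
Proof.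
case: w => [|a w] /=; first by left.
by move/walk_first_visit => [h | [u [v [-> hu hv]]]]; [left | right; exists (a :: u), v].
Qed.

Lemma reach_loops X z w :
  star (fun s => reach X z s z) w -> reach (z |: X) z w z.
Proof.
have sX : X \subset z |: X by apply: subsetUr.
move=> [ws [-> hws]]; elim: ws hws => [|s ws IH] hws //=.
apply: (reach_cat (setU11 _ _)); first by apply: reach_subset sX _; apply: hws; rewrite mem_head.
by apply: IH => s' ws_s'; apply: hws; rewrite inE ws_s' orbT.
Qed.

Lemma reach_from_loops X z w q :
  reach (z |: X) z w q -> conc (star (fun s => reach X z s z)) (fun v => reach X z v q) w.
Proof.
have [n] := ubnP (size w); elim: n w => // n IH w /ltnSE sw.
case/reach_first_visit => [h | [u [v [ew nu hu hv]]]].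
  by exists [::], w; split=> //; split=> //; apply: star_nil.
have sv : size v < n.
  by apply: leq_trans sw; rewrite ew size_cat -add1n leq_add2r lt0n size_eq0.
have [l1 [l2 [ev [hl1 hl2]]]] := IH v sv hv.
by exists (u ++ l1), l2; rewrite ew ev catA; split=> //; split=> //; apply: star_cons.
Qed.

Lemma reach_setU1 X z p w q :
  reach (z |: X) p w q <->
  reach X p w q \/
  conc (fun u => reach X p u z)
       (conc (star (fun s => reach X z s z)) (fun v => reach X z v q)) w.
Proof.
have sX : X \subset z |: X by apply: subsetUr.
split=> [/reach_first_visit [h | [u [v [-> _ hu /reach_from_loops hv]]]] | ].
- by left.
- by right; exists u, v.
case=> [/(reach_subset sX) // | [u [v [-> [hu [l1 [l2 [-> [hl1 hl2]]]]]]]]].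
apply: (reach_cat (setU11 _ _)); first exact: reach_subset sX hu.
by apply: (reach_cat (setU11 _ _)); [apply: reach_loops | apply: reach_subset sX hl2].
Qed.

Lemma regular_reach X p q : regular (fun w => reach X p w q).
Proof.
rewrite -(set_enum X); elim: (enum X) p q => [|z s IH] p q.
  have -> : [set x in [::]] = set0 :> {set S} by apply/setP => y; rewrite !inE.
  apply: regular_ext (regular_or (regular_guard (p = q) (regular_lang (REps Sigma)))
    (regular_bigcup (fun a => next p a = q) (fun a => regular_lang (RAtom a)))) => w.
  exact: iff_sym (reach_set0 p w q).
have -> : [set x in z :: s] = z |: [set x in s] by apply/setP => y; rewrite !inE.
apply: regular_ext (regular_or (IH p q)
  (regular_conc (IH p z) (regular_conc (regular_star (IH z z)) (IH z q)))) => w.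
exact: iff_sym (reach_setU1 _ _ _ _ _).
Qed.

End Paths.

Lemma recognizable_regular (Sigma : finType) (L : seq Sigma -> Prop) :
  recognizable L -> regular L.
Proof.
move=> [I [Q hQ]]; have [i0 Qi0] := hQ [::].
pose next i a := odflt i [pick j | `[< Q j = lquot (Q i) [:: a] >]].
have run w : Q (foldl next i0 w) = lquot L w.
  elim/last_ind: w => [// | w a IH]; rewrite foldl_rcons /next.
  case: pickP => [j /asboolP -> | none]; first by rewrite IH lquot_cat cats1.
  have [j Qj] := hQ (rcons w a).
  by have := none j; rewrite IH lquot_cat cats1 -Qj asboolT.
apply: regular_ext (regular_bigcup (fun q => Q q [::]) (regular_reach next setT i0)) => w.
split=> [[q Qq /reach_setT ew] | Lw]; first by move: Qq; rewrite -ew run /lquot cats0.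
by exists (foldl next i0 w); [rewrite run /lquot cats0 | apply/reach_setT].
Qed.

Section Saturation.
Variable Sigma : finType.
Implicit Types (L P : seq Sigma -> Prop) (Ls : seq (seq Sigma -> Prop)).

Definition agree Ls u v : Prop := forall L, List.In L Ls -> (L u <-> L v).

Definition saturated Ls P : Prop := forall u v, agree Ls u v -> P u -> P v.

Lemma recognizable_saturated Ls P :
  (forall L, List.In L Ls -> recognizable L) -> saturated Ls P -> recognizable P.
Proof.
elim: Ls P => [|L Ls IH] P hLs hP.
  by apply: recognizable_const => u v; apply: hP.
pose part K w := exists2 u, K u /\ P u & agree Ls u w.
have part_rec K : recognizable (part K).
  apply: IH => [M hM | v v' hvv' [u KPu huv]]; first by apply: hLs; right.
  by exists u => // M hM; apply: iff_trans (huv M hM) (hvv' M hM).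
have -> : P = fun w => L w /\ part L w \/ ~ L w /\ part (fun u => ~ L u) w.
  apply/predeqP => w; split=> [Pw | ].
    by case: (pselect (L w)) => Lw; [left | right]; split=> //; exists w.
  case=> [[Lw [u [Lu Pu] huw]] | [nLw [u [nLu Pu] huw]]];
    apply: hP Pu => M /= [<- | /(huw M) //]; first by split.
  by split=> [/nLu | /nLw].
have recL : recognizable L by apply: hLs; left.
exact: recognizable_or (recognizable_and recL (part_rec L))
  (recognizable_and (recognizable_compl recL) (part_rec _)).
Qed.

End Saturation.

Fixpoint regexes (X Sigma : finType) (f : formula X Sigma) : seq (regex Sigma) :=
  match f with
  | FOr f1 f2 => regexes f1 ++ regexes f2
  | FNot f1 => regexes f1
  | FMatch _ r => [:: r]
  end.

Lemma eq_holds (X Sigma : finType) (rho1 rho2 : assignment X Sigma) x f :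
  (forall y, y != x -> rho1 y = rho2 y) ->
  (forall r, List.In r (regexes f) -> (lang r (rho1 x) <-> lang r (rho2 x))) ->
  holds rho1 f <-> holds rho2 f.
Proof.
move=> off; elim: f => [f1 IH1 f2 IH2 | f IH | y r] /= hr.
- rewrite IH1 ?IH2 // => r hin; apply: hr; apply/List.in_app_iff; by [right | left].
- by rewrite IH.
- by have [-> | yx] := eqVneq y x; [apply: hr; left | rewrite off].
Qed.

Lemma valid_domain_saturated (X Sigma : finType) (F : seq (formula X Sigma)) x rho :
  saturated [seq lquot (lang r) (rho x) | r <- List.flat_map (@regexes X Sigma) F]
    (valid_domain F rho x).
Proof.
move=> u v huv [rho' [rho'x sol_u]]; subst u.
pose rho'' y := if y == x then v else rho' y.
exists rho''; split=> [|f Ff]; first by rewrite /rho'' eqxx.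
have off y : y != x -> concat_assign rho rho' y = concat_assign rho rho'' y.
  by move=> /negbTE yx; rewrite /concat_assign /rho'' yx.
apply: (proj1 (eq_holds off _)) (sol_u f Ff) => r hr.
rewrite /concat_assign /rho'' eqxx; apply: (huv (lquot (lang r) (rho x))).
by apply/List.in_map_iff; exists r; split=> //; apply/List.in_flat_map; exists f.
Qed.

Theorem theorem1 (X Sigma : finType) (F : seq (formula X Sigma))
  (x : X) (rho : assignment X Sigma) :
  regular (valid_domain F rho x).
Proof.
apply/recognizable_regular/(recognizable_saturated _ (@valid_domain_saturated _ _ F x rho)).
move=> _ /List.in_map_iff [r [<- _]].
exact/recognizable_lquot/regex_recognizable.
Qed.
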